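(* Let $n\ge1$, $G\le S_n$ and $\chi$ a character of $G$. Then $d_\chi^G(AB)=d_\chi^G(A)\,d_\chi^G(B)$ for all $A,B\in\mathbb S_n(\mathbb C)$ if and only if $d_\chi^G=\det$ on $M_n(\mathbb C)$.
   Context: A character of $G\le S_n$ is a function $g\mapsto\operatorname{tr}(\rho(g))$ for some homomorphism $\rho:G\to GL_m(\mathbb C)$, $m\ge1$. $\mathbb S_n(\mathbb C)$ is the set of complex symmetric $n\times n$ matrices. $d_\chi^G(A)=\sum_{\sigma\in G}\chi(\sigma)\prod_{i=1}^n A_{i\,\sigma(i)}$ for $A\in M_n(\mathbb C)$. *)

From HB Require Import structures.
From mathcomp Require Import all_boot all_order all_algebra all_fingroup all_character.
Set Implicit Arguments. Unset Strict Implicit. Unset Printing Implicit Defensive.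
Import GRing.Theory Num.Theory.
Local Open Scope ring_scope.

Definition is_character (C : numClosedFieldType) (n : nat)
    (G : {group 'S_n}) (chi : 'S_n -> C) : Prop :=
  exists m : nat, (0 < m)%N /\
    exists rho : 'S_n -> 'M[C]_m,
      mx_repr G rho /\ {in G, forall g, chi g = \tr (rho g)}.

Definition dchiG (C : numClosedFieldType) (n : nat) (G : {group 'S_n})
    (chi : 'S_n -> C) (A : 'M[C]_n) : C :=
  \sum_(s in G) chi s * \prod_(i < n) A i (s i).

From HB Require Import structures.
From mathcomp Require Import all_boot all_order all_algebra all_fingroup all_character.
Import GRing.Theory Num.Theory.
Local Open Scope ring_scope.

(* Only the direction "multiplicative on symmetric matrices implies d = det"
   needs work.  At the identity, d(I) = chi(1) is a nonzero natural number with
   chi(1)^2 = chi(1), so chi has degree one and is multiplicative on G.  For a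
   transposition t = (i j), the symmetric matrices J and K that act as
   [[1,1],[1,1]] and [[1,-1],[-1,1]] on the coordinates i, j (and as the
   identity elsewhere) satisfy JK = 0, while d(J) = d(K) = 1 + chi(t) when
   t \in G and 1 otherwise; hence t \in G and chi(t) = -1.  Transpositions
   generate S_n, so G = S_n and chi is the sign, i.e. d = det. *)

Section Block2.
Variables (R : pzRingType) (n : nat) (i j : 'I_n).
Hypothesis hij : i != j.

Definition block2_mx (a b c d : R) : 'M[R]_n :=
  \matrix_(r, l) if r == i then (if l == i then a else if l == j then b else 0)
    else if r == j then (if l == i then c else if l == j then d else 0)
    else (r == l)%:R.

Lemma tr_block2_mx a b c d : (block2_mx a b c d)^T = block2_mx a c b d.
Proof.
have hji : j != i by rewrite eq_sym.
apply/matrixP => r l; rewrite !mxE.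
case ri: (r == i); case li: (l == i); case rj: (r == j); case lj: (l == j) => //=;
  rewrite ?(eqP ri) ?(eqP li) ?(eqP rj) ?(eqP lj) ?eqxx ?(negbTE hij) ?(negbTE hji) //;
  by rewrite ?li ?ri ?lj ?rj // eq_sym.
Qed.

Lemma mul_block2_mx a b c d a' b' c' d' :
  block2_mx a b c d *m block2_mx a' b' c' d' =
  block2_mx (a * a' + b * c') (a * b' + b * d') (c * a' + d * c') (c * b' + d * d').
Proof.
have hji : j != i by rewrite eq_sym.
apply/matrixP => r l; rewrite !mxE (bigD1 i) //= (bigD1 j) /=; last by rewrite hji.
rewrite (eq_bigr (fun k => (r == k)%:R * (k == l)%:R)); last first.
  move=> k /andP[ki kj]; rewrite !mxE (negbTE ki) (negbTE kj).
  have [->|ri] := eqVneq r i; first by rewrite /= (eq_sym i) (negbTE ki) mul0r.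
  have [->|rj] := eqVneq r j; first by rewrite /= (eq_sym j) (negbTE kj) mul0r.
  by [].
have [->|ri] := eqVneq r i.
  rewrite big1 ?addr0 => [|k /andP[ki kj]]; last by rewrite (eq_sym i) (negbTE ki) mul0r.
  rewrite !mxE !eqxx (negbTE hji).
  by case: (l == i); case: (l == j); rewrite ?mulr0 ?addr0.
have [->|rj] := eqVneq r j.
  rewrite big1 ?addr0 => [|k /andP[ki kj]]; last by rewrite (eq_sym j) (negbTE kj) mul0r.
  rewrite !mxE !eqxx (negbTE hji).
  by case: (l == i); case: (l == j); rewrite ?mulr0 ?addr0.
rewrite (bigD1 r) /=; last by rewrite ri rj.
rewrite big1 => [|k /andP[/andP[_ _] kr]]; last by rewrite eq_sym (negbTE kr) mul0r.
rewrite !mxE (negbTE ri) (negbTE rj) !eqxx !mul0r !add0r addr0 mul1r.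
have [->|li] := eqVneq l i; first by rewrite (negbTE ri).
by have [->|lj] := eqVneq l j; first by rewrite (negbTE rj).
Qed.

End Block2.

Arguments block2_mx {R n} i j a b c d.
Arguments tr_block2_mx {R n i j} hij a b c d.
Arguments mul_block2_mx {R n i j} hij a b c d a' b' c' d'.

Lemma perm_fix_all_but2 {T : finType} {i j : T} {s : {perm T}} :
    i != j -> (forall k, k != i -> k != j -> s k = k) ->
  s = 1%g \/ s = tperm i j.
Proof.
move=> hij fix_s.
have fix_im k : s k != i -> s k != j -> s k = k.
  by move=> ski skj; apply: perm_inj; apply: fix_s.
have [si|si] := eqVneq (s i) i.
  left; have sj : s j = j.
    have [//|sjj] := eqVneq (s j) j; apply: fix_im sjj.
    by rewrite -si (inj_eq perm_inj) eq_sym.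
  apply/permP => k; rewrite perm1.
  have [->|ki] := eqVneq k i; first by [].
  by have [->|kj] := eqVneq k j; last exact: fix_s.
have si_j : s i = j.
  have [//|sij] := eqVneq (s i) j.
  by move/eqP: (fix_im i si sij); rewrite (negbTE si).
have sj_i : s j = i.
  have [//|sji] := eqVneq (s j) i.
  have sjj : s j != j by rewrite -{2}si_j (inj_eq perm_inj) eq_sym.
  by move/eqP: (fix_im j sji sjj); rewrite (negbTE sjj).
right; apply/permP => k.
have [->|ki] := eqVneq k i; first by rewrite tpermL.
have [->|kj] := eqVneq k j; first by rewrite tpermR.
by rewrite tpermD 1?eq_sym // fix_s.
Qed.

Lemma tperm_neq1 {T : finType} {i j : T} : i != j -> tperm i j != 1%g.
Proof. by move=> hij; apply/eqP => h; move: (odd_tperm i j); rewrite h odd_perm1 hij. Qed.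

Lemma prod_block2_mx_perm (R : comPzRingType) (n : nat) (i j : 'I_n)
    (a b c d : R) (s : 'S_n) : i != j ->
  \prod_k block2_mx i j a b c d k (s k) =
  if s == 1%g then a * d else if s == tperm i j then b * c else 0.
Proof.
move=> hij; have hji : j != i by rewrite eq_sym.
have [k /and3P[ki kj sk] | fixed] := pickP (fun k => [&& k != i, k != j & s k != k]).
  have ns1 : s != 1%g by apply: contraNneq sk => ->; rewrite perm1.
  have nst : s != tperm i j by apply: contraNneq sk => ->; rewrite tpermD // eq_sym.
  rewrite (negbTE ns1) (negbTE nst) (bigD1 k) //= mxE (negbTE ki) (negbTE kj).
  by rewrite eq_sym (negbTE sk) mul0r.
have fix_s k : k != i -> k != j -> s k = k.
  by move=> ki kj; apply/eqP; move: (fixed k); rewrite ki kj /= => /negbFE.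
have -> : \prod_k block2_mx i j a b c d k (s k) =
    block2_mx i j a b c d i (s i) * block2_mx i j a b c d j (s j).
  rewrite (bigD1 i) //= (bigD1 j) /=; last by rewrite hji.
  rewrite mulrA big1 ?mulr1 // => k /andP[ki kj].
  by rewrite mxE (negbTE ki) (negbTE kj) fix_s // eqxx.
have [-> | ->] := perm_fix_all_but2 hij fix_s.
  by rewrite eqxx !mxE !perm1 !eqxx (negbTE hji).
rewrite (negbTE (tperm_neq1 hij)) eqxx !mxE tpermL tpermR.
by rewrite !eqxx (negbTE hji) mulrC.
Qed.

Lemma prod_mx1_perm (R : comPzSemiRingType) (n : nat) (s : 'S_n) :
  \prod_k (1%:M : 'M[R]_n) k (s k) = (s == 1%g)%:R.
Proof.
have [->|ns1] := eqVneq s 1%g.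
  by rewrite big1 // => k _; rewrite perm1 mxE eqxx.
have [k sk|fixed] := pickP (fun k => s k != k).
  by rewrite (bigD1 k) //= mxE eq_sym (negbTE sk) mul0r.
case/eqP: ns1; apply/permP => k; rewrite perm1.
by apply/eqP/negbNE; rewrite fixed.
Qed.

Section GeneralizedMatrixFunction.
Context {C : numClosedFieldType} {n : nat} (G : {group 'S_n}) (chi : 'S_n -> C).

Lemma dchiG_mx1 : dchiG G chi 1%:M = chi 1%g.
Proof.
rewrite /dchiG (bigD1 1%g) ?group1 //= prod_mx1_perm eqxx mulr1 big1 ?addr0 //.
by move=> s /andP[_ s1]; rewrite prod_mx1_perm (negbTE s1) mulr0.
Qed.

Lemma dchiG_block2_mx (i j : 'I_n) (a b c d : C) : i != j ->
  dchiG G chi (block2_mx i j a b c d) =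
  chi 1%g * (a * d) + (if tperm i j \in G then chi (tperm i j) * (b * c) else 0).
Proof.
move=> hij; rewrite /dchiG (bigD1 1%g) ?group1 //= prod_block2_mx_perm // eqxx.
congr (_ + _); have [tG|tNG] := boolP (tperm i j \in G).
  rewrite (bigD1 (tperm i j)) /=; last by rewrite tG tperm_neq1.
  rewrite prod_block2_mx_perm // (negbTE (tperm_neq1 hij)) eqxx big1 ?addr0 //.
  move=> s /andP[/andP[_ s1] st].
  by rewrite prod_block2_mx_perm // (negbTE s1) (negbTE st) mulr0.
rewrite big1 // => s /andP[sG s1].
have st : s != tperm i j by apply: contraNneq tNG => <-.
by rewrite prod_block2_mx_perm // (negbTE s1) (negbTE st) mulr0.
Qed.

Lemma dchiG_det : (forall s, s \in G) -> (forall s, chi s = (-1) ^+ s) ->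
  forall A, dchiG G chi A = \det A.
Proof.
move=> allG chi_sign A; rewrite /dchiG /determinant.
rewrite (eq_bigl predT) => [|s]; last exact: allG.
by apply: eq_bigr => s _; rewrite chi_sign.
Qed.

End GeneralizedMatrixFunction.

Lemma morph_tperm_signE {T : finType} {R : pzRingType} {G : {group {perm T}}}
    {chi : {perm T} -> R} :
  {in G &, {morph chi : x y / (x * y)%g >-> x * y}} -> chi 1%g = 1 ->
  (forall i j : T, i != j -> tperm i j \in G /\ chi (tperm i j) = -1) ->
  forall s, s \in G /\ chi s = (-1) ^+ s.
Proof.
move=> chiM chi1 chi_tperm s; have [ts -> {s}] := prod_tpermP s.
elim: ts => [|t ts IH] /=; first by rewrite big_nil group1 odd_perm1.
case/andP=> dt /IH[tsG chi_ts]; have [tG chi_t] := chi_tperm _ _ dt.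
rewrite big_cons groupM // chiM // chi_ts chi_t odd_mul_tperm dt.
by rewrite signr_addb expr1.
Qed.

Section Characters.
Context {C : numClosedFieldType} {n : nat} {G : {group 'S_n}} {chi : 'S_n -> C}.
Hypothesis hchi : is_character G chi.

Lemma character1_neq0 : chi 1%g != 0.
Proof.
have [m [m_gt0 [rho [[rho1 _] chi_tr]]]] := hchi.
by rewrite chi_tr // rho1 mxtrace1 pnatr_eq0 -lt0n.
Qed.

Lemma character1_eq1_morph : chi 1%g = 1 ->
  {in G &, {morph chi : x y / (x * y)%g >-> x * y}}.
Proof.
have [m [_ [rho [[rho1 rhoM] chi_tr]]]] := hchi.
rewrite chi_tr // rho1 mxtrace1 => /eqP; rewrite pnatr_eq1 => /eqP m1; subst m.
move=> x y xG yG; rewrite !chi_tr ?groupM // rhoM //.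
by rewrite /mxtrace !big_ord1 mxE big_ord1.
Qed.

End Characters.

Section MultiplicativeOnSymmetric.
Context {C : numClosedFieldType} {n : nat} {G : {group 'S_n}} {chi : 'S_n -> C}.
Hypothesis hchi : is_character G chi.
Hypothesis dchiGM : forall A B : 'M[C]_n, A^T = A -> B^T = B ->
  dchiG G chi (A *m B) = dchiG G chi A * dchiG G chi B.

Lemma dchiGM_chi1 : chi 1%g = 1.
Proof.
have := dchiGM 1%:M 1%:M (trmx1 _ _) (trmx1 _ _); rewrite mulmx1 dchiG_mx1.
by move=> h; apply: (mulfI (character1_neq0 hchi)); rewrite mulr1 -h.
Qed.

Lemma dchiGM_tperm (i j : 'I_n) : i != j ->
  tperm i j \in G /\ chi (tperm i j) = -1.
Proof.
move=> hij.
pose x := if tperm i j \in G then chi (tperm i j) else 0.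
have dchi_sym (b : C) : dchiG G chi (block2_mx i j 1 b b 1) = 1 + x * b ^+ 2.
  by rewrite dchiG_block2_mx // dchiGM_chi1 /x; case: ifP; rewrite !mul1r ?mul0r.
have JK0 : block2_mx i j 1 1 1 1 *m (block2_mx i j 1 (-1) (-1) 1 : 'M[C]_n) =
             block2_mx i j 0 0 0 0.
  by rewrite mul_block2_mx // !mul1r addrN addNr.
have := dchiGM _ _ (tr_block2_mx hij 1 1 1 1) (tr_block2_mx hij 1 (-1) (-1) 1).
rewrite JK0 !dchi_sym dchiG_block2_mx // !mulr0 if_same addr0 sqrrN expr1n mulr1.
move/esym/eqP; rewrite mulf_eq0 orbb addr_eq0 /x => /eqP.
case: ifP => [tG ->|_]; first by rewrite opprK.
by rewrite oppr0 => /eqP; rewrite oner_eq0.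
Qed.

End MultiplicativeOnSymmetric.

Theorem mainTheorem15 (C : numClosedFieldType) (n : nat) (G : {group 'S_n})
    (chi : 'S_n -> C) (hn : (0 < n)%N) (hchi : is_character G chi) :
  (forall A B : 'M[C]_n, A^T = A -> B^T = B ->
     dchiG G chi (A *m B) = dchiG G chi A * dchiG G chi B)
  <-> (forall A : 'M[C]_n, dchiG G chi A = \det A).
Proof.
split=> [dchiGM | dchiG_detE A B _ _]; last by rewrite !dchiG_detE det_mulmx.
have chi1 := dchiGM_chi1 hchi dchiGM.
have chi_sign := morph_tperm_signE (character1_eq1_morph hchi chi1) chi1
  (dchiGM_tperm hchi dchiGM).
by apply: dchiG_det => s; have [] := chi_sign s.
Qed.
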